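(* Let $v_1,v_2\in L_2(0,1)$, $\alpha\in[0,2\pi)$ and $v=v_1+e^{i\alpha}v_2$. For $w_1,w_2\in L_2(0,1)$ let $A(w_1,w_2,\alpha)$ denote the operator in $L_2(0,1)$ acting by $$A(w_1,w_2,\alpha)\psi(x)=i\psi'(x)+w_1(x)\Big[\psi(0)-\tfrac{i}{2}\langle\psi,w_1\rangle\Big]+w_2(x)\Big[\psi(1)+\tfrac{i}{2}\langle\psi,w_2\rangle\Big]$$ on the domain of $\psi\in W_2^1(0,1)$ with $\psi(1)+i\langle\psi,w_2\rangle=e^{i\alpha}[\psi(0)-i\langle\psi,w_1\rangle]$. Then $A(v_1,v_2,\alpha)$ and $A(v,0,\alpha)$ have the same domain (the domain of the latter being given by $\psi(1)=e^{i\alpha}[\psi(0)-i\langle\psi,v\rangle]$), and their difference is the bounded self-adjoint operator of rank at most $2$ $$\big[A(v_1,v_2,\alpha)-A(v,0,\alpha)\big]\psi=\tfrac{i}{2}e^{-i\alpha}v_1\langle\psi,v_2\rangle-\tfrac{i}{2}e^{i\alpha}v_2\langle\psi,v_1\rangle.$$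
   Context: $\langle f,g\rangle=\int_0^1 f\bar g\,dx$; $W_2^1(0,1)$ is the Sobolev space. *)

From HB Require Import structures.
From mathcomp Require Import all_boot all_order all_algebra.
From mathcomp Require Import all_classical all_reals all_analysis.
From mathcomp Require Import complex.
Set Implicit Arguments. Unset Strict Implicit. Unset Printing Implicit Defensive.
Import Order.TTheory GRing.Theory Num.Theory.
Import numFieldNormedType.Exports.
Local Open Scope classical_set_scope.
Local Open Scope ring_scope.

Section Defs.
Variable R : realType.
Local Notation C := R[i].
Local Notation mu := (@lebesgue_measure R).

(* the interval [0,1] (endpoints are a null set, so = (0,1) for L_2) *)
Definition I01 : set R := `[0%R, 1%R].

Definition L2 (f : R -> C) : Prop :=
  [/\ measurable_fun I01 (fun x => complex.Re (f x)),
      measurable_fun I01 (fun x => complex.Im (f x)) &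
      mu.-integrable I01
        (fun x => ((complex.Re (f x)) ^+ 2 + (complex.Im (f x)) ^+ 2)%:E)].

Definition cint (D : set R) (f : R -> C) : C :=
  Complex (Rintegral mu D (fun x => complex.Re (f x)))
          (Rintegral mu D (fun x => complex.Im (f x))).

Definition ip (f g : R -> C) : C := cint I01 (fun x => f x * conjc (g x)).

Definition l2norm (f : R -> C) : R := Num.sqrt (complex.Re (ip f f)).

(* psi \in W_2^1(0,1) with (weak) derivative phi \in L_2(0,1):
   psi is absolutely continuous, psi(x) = psi(0) + int_0^x phi *)
Definition W21 (psi phi : R -> C) : Prop :=
  L2 phi /\ forall x, x \in I01 -> psi x = psi 0 + cint `[0%R, x] phi.

Definition expi (a : R) : C := Complex (cos a) (sin a).

Definition domA (w1 w2 : R -> C) (a : R) (psi : R -> C) : Prop :=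
  psi 1 + 'i%C * ip psi w2 = expi a * (psi 0 - 'i%C * ip psi w1).

(* action of A(w1,w2,alpha) on psi, whose derivative is phi *)
Definition opA (w1 w2 : R -> C) (psi phi : R -> C) (x : R) : C :=
  'i%C * phi x
  + w1 x * (psi 0 - ('i%C / 2%:R) * ip psi w1)
  + w2 x * (psi 1 + ('i%C / 2%:R) * ip psi w2).

Definition opK (v1 v2 : R -> C) (a : R) (psi : R -> C) (x : R) : C :=
  ('i%C / 2%:R) * conjc (expi a) * v1 x * ip psi v2
  - ('i%C / 2%:R) * expi a * v2 x * ip psi v1.

End Defs.

(* Since <psi, v> = <psi, v1> + e^{-i alpha} <psi, v2> and e^{i alpha} e^{-i alpha} = 1,
   the boundary condition psi(1) = e^{i alpha} [psi(0) - i <psi, v>] of A(v, 0, alpha) is the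
   condition psi(1) + i <psi, v2> = e^{i alpha} [psi(0) - i <psi, v1>] of A(v1, v2, alpha).
   Substituting this value of psi(1) into the difference of the two actions cancels everything
   but the rank-two term K psi.  K is bounded by the Cauchy-Schwarz inequality and symmetric by
   the sesquilinearity and Hermitian symmetry of the inner product.  The only analytic input is
   that a W_2^1 function, a constant plus the primitive of an integrable function, is continuous
   on [0, 1], hence in L_2, so that the inner products above are linear in psi. *)

From HB Require Import structures.
From mathcomp Require Import all_boot all_order all_algebra.
From mathcomp Require Import all_classical all_reals all_analysis.
From mathcomp Require Import complex measurable_realfun.
From mathcomp Require Import lra ring.
Import Order.TTheory GRing.Theory Num.Theory.
Import numFieldNormedType.Exports.
Local Open Scope classical_set_scope.
Local Open Scope ring_scope.
Set Implicit Arguments. Unset Strict Implicit. Unset Printing Implicit Defensive.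

Local Notation Re := complex.Re.
Local Notation Im := complex.Im.

Section ComplexParts.
Variable R : rcfType.
Implicit Types x y : R[i].

Lemma complex_ext x y : Re x = Re y -> Im x = Im y -> x = y.
Proof. by case: x; case: y => /= ? ? ? ? -> ->. Qed.

Lemma complex_ReD x y : Re (x + y) = Re x + Re y. Proof. by case: x; case: y. Qed.
Lemma complex_ImD x y : Im (x + y) = Im x + Im y. Proof. by case: x; case: y. Qed.
Lemma complex_ReM x y : Re (x * y) = Re x * Re y - Im x * Im y. Proof. by case: x; case: y. Qed.
Lemma complex_ImM x y : Im (x * y) = Re x * Im y + Im x * Re y. Proof. by case: x; case: y. Qed.
Lemma complex_ReJ x : Re (conjc x) = Re x. Proof. by case: x. Qed.
Lemma complex_ImJ x : Im (conjc x) = - Im x. Proof. by case: x. Qed.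

Lemma complex_ReMJ x y : Re (x * conjc y) = Re x * Re y + Im x * Im y.
Proof. by rewrite complex_ReM complex_ReJ complex_ImJ mulrN opprK. Qed.

Lemma complex_ImMJ x y : Im (x * conjc y) = Im x * Re y - Re x * Im y.
Proof. by rewrite complex_ImM complex_ReJ complex_ImJ mulrN addrC. Qed.

(* [rmorphM] would leave the morphism structure, not [conjc], in the goal. *)
Lemma conjcM x y : conjc (x * y) = conjc x * conjc y.
Proof. exact: rmorphM. Qed.

Lemma conjcN x : conjc (- x) = - conjc x.
Proof. exact: rmorphN. Qed.

Lemma conjc_i : conjc ('i%C : R[i]) = - 'i%C.
Proof. by apply: complex_ext => /=; rewrite ?oppr0. Qed.

Lemma conjc_invn (n : nat) : conjc (n%:R^-1 : R[i]) = n%:R^-1.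
Proof. by rewrite conjc_inv conjc_nat. Qed.

End ComplexParts.

Section SquaredModulus.
Variable R : rcfType.
Implicit Types x y : R[i].

Definition sqnormc x : R := Re x ^+ 2 + Im x ^+ 2.

Lemma sqnormc_ge0 x : 0 <= sqnormc x.
Proof. by rewrite addr_ge0 ?sqr_ge0. Qed.

Lemma sqnormcM x y : sqnormc (x * y) = sqnormc x * sqnormc y.
Proof. by rewrite /sqnormc complex_ReM complex_ImM; ring. Qed.

Lemma sqnormcD_le x y : sqnormc (x + y) <= 2 * sqnormc x + 2 * sqnormc y.
Proof.
rewrite /sqnormc complex_ReD complex_ImD.
have := sqr_ge0 (Re x - Re y); have := sqr_ge0 (Im x - Im y); nra.
Qed.

Lemma sqnormc_lincomb_le (c1 c2 x y : R[i]) :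
  sqnormc (c1 * x + c2 * y) <= 2 * sqnormc c1 * sqnormc x + 2 * sqnormc c2 * sqnormc y.
Proof. by rewrite -!mulrA -!sqnormcM sqnormcD_le. Qed.

Lemma sqnormcJ x : sqnormc (conjc x) = sqnormc x.
Proof. by rewrite /sqnormc complex_ReJ complex_ImJ sqrrN. Qed.

Lemma sqnormcN x : sqnormc (- x) = sqnormc x.
Proof. by case: x => a b; rewrite /sqnormc /= !sqrrN. Qed.

Lemma sqnormc_ihalf : sqnormc ('i%C / 2%:R : R[i]) = 4^-1.
Proof. by rewrite /sqnormc /=; field. Qed.

Lemma ReMJ_amgm x y t : 0 < t ->
  2 * t * `|Re (x * conjc y)| <= t ^+ 2 * sqnormc x + sqnormc y.
Proof.
move=> t_gt0; rewrite complex_ReMJ /sqnormc.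
have := sqr_ge0 (t * Re x - Re y); have := sqr_ge0 (t * Im x - Im y).
have := sqr_ge0 (t * Re x + Re y); have := sqr_ge0 (t * Im x + Im y).
by case: (lerP 0 (Re x * Re y + Im x * Im y)) => [/ger0_norm|/ltr0_norm] ->; nra.
Qed.

Lemma ImMJ_amgm x y t : 0 < t ->
  2 * t * `|Im (x * conjc y)| <= t ^+ 2 * sqnormc x + sqnormc y.
Proof.
move=> t_gt0; rewrite complex_ImMJ /sqnormc.
have := sqr_ge0 (t * Im x - Re y); have := sqr_ge0 (t * Re x + Im y).
have := sqr_ge0 (t * Im x + Re y); have := sqr_ge0 (t * Re x - Im y).
by case: (lerP 0 (Im x * Re y - Re x * Im y)) => [/ger0_norm|/ltr0_norm] ->; nra.
Qed.

End SquaredModulus.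

Section Expi.
Variable R : realType.

Lemma expi_mulJ (a : R) : expi a * conjc (expi a) = 1.
Proof. by apply: complex_ext; rewrite ?complex_ReMJ ?complex_ImMJ /= ?cos2Dsin2 // mulrC subrr. Qed.

Lemma sqnormc_expi (a : R) : sqnormc (expi a) = 1.
Proof. exact: cos2Dsin2. Qed.

End Expi.

Section QuadraticBound.
Variable R : realFieldType.

Lemma sqr_le_mul_of_amgm (x A B : R) : 0 <= A -> 0 <= B ->
  (forall t, 0 < t -> 2 * t * `|x| <= t ^+ 2 * A + B) -> x ^+ 2 <= A * B.
Proof.
move=> A_ge0 B_ge0 amgm; rewrite -real_normK ?num_real //.
have [x0|x_neq0] := eqVneq `|x| 0; first by rewrite x0 expr0n mulr_ge0.
have x_gt0 : 0 < `|x| by rewrite lt0r x_neq0 normr_ge0.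
have [A0|A_neq0] := eqVneq A 0.
  have t_gt0 : 0 < (B + 1) / `|x| by rewrite divr_gt0 // ltr_wpDl.
  have tx : (B + 1) / `|x| * `|x| = B + 1 by rewrite divfK.
  by have := amgm _ t_gt0; rewrite A0 -mulrA tx; lra.
have A_gt0 : 0 < A by rewrite lt0r A_neq0.
set t := `|x| / A; have t_gt0 : 0 < t by rewrite divr_gt0.
have xE : `|x| = t * A by rewrite divfK.
by have := amgm _ t_gt0; rewrite xE; nra.
Qed.

End QuadraticBound.

Local Notation mu := (@lebesgue_measure _).
Local Notation rintegrable D f := (mu.-integrable D (EFin \o f)).

Definition cmeasurable (R : realType) (D : set R) (h : R -> R[i]) : Prop :=
  measurable_fun D (fun x => Re (h x)) /\ measurable_fun D (fun x => Im (h x)).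

Definition cintegrable (R : realType) (D : set R) (h : R -> R[i]) : Prop :=
  rintegrable D (fun x => Re (h x)) /\ rintegrable D (fun x => Im (h x)).

Section ComplexIntegral.
Variables (R : realType) (D : set R).
Hypothesis mD : measurable (D : set (measurableTypeR R)).
Implicit Types (f g : R -> R) (h : R -> R[i]).

Lemma cmeasurable_cst (c : R[i]) : cmeasurable D (fun=> c).
Proof. by split; apply: measurable_cst. Qed.

Lemma cmeasurableD h1 h2 : cmeasurable D h1 -> cmeasurable D h2 ->
  cmeasurable D (fun x => h1 x + h2 x).
Proof.
move=> [mRe1 mIm1] [mRe2 mIm2]; split.
- move: (measurable_funD mRe1 mRe2); apply: eq_measurable_fun => x _.
  by rewrite complex_ReD.
- move: (measurable_funD mIm1 mIm2); apply: eq_measurable_fun => x _.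
  by rewrite complex_ImD.
Qed.

Lemma cmeasurableM h1 h2 : cmeasurable D h1 -> cmeasurable D h2 ->
  cmeasurable D (fun x => h1 x * h2 x).
Proof.
move=> [mRe1 mIm1] [mRe2 mIm2]; split.
- move: (measurable_funB (measurable_funM mRe1 mRe2) (measurable_funM mIm1 mIm2)).
  apply: eq_measurable_fun => x _.
  by rewrite complex_ReM.
- move: (measurable_funD (measurable_funM mRe1 mIm2) (measurable_funM mIm1 mRe2)).
  apply: eq_measurable_fun => x _.
  by rewrite complex_ImM.
Qed.

Lemma cmeasurableJ h : cmeasurable D h -> cmeasurable D (fun x => conjc (h x)).
Proof.
move=> [mRe mIm]; split.
- by move: mRe; apply: eq_measurable_fun => x _; rewrite complex_ReJ.
- move: (measurable_funB (measurable_cst (0 : R)) mIm); apply: eq_measurable_fun => x _ /=.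
  by rewrite complex_ImJ sub0r.
Qed.

Lemma measurable_sqnormc h : cmeasurable D h -> measurable_fun D (fun x => sqnormc (h x)).
Proof.
move=> [mRe mIm]; move: (measurable_funD (measurable_funM mRe mRe) (measurable_funM mIm mIm)).
by apply: eq_measurable_fun => x _; rewrite /sqnormc !expr2.
Qed.

Lemma rintegrableD f g : rintegrable D f -> rintegrable D g ->
  rintegrable D (fun x => f x + g x).
Proof.
move=> iF iG; apply: (eq_integrable mD _ _ _ (integrableD mD iF iG)) => x _ /=.
by rewrite EFinD.
Qed.

Lemma rintegrableZ (k : R) f : rintegrable D f -> rintegrable D (fun x => k * f x).
Proof.
move=> iF; apply: (eq_integrable mD _ _ _ (integrableZl mD k iF)) => x _ /=.
by rewrite EFinM.
Qed.

Lemma rintegrable_le f g : measurable_fun D f -> rintegrable D g ->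
  (forall x, D x -> `|f x| <= g x) -> rintegrable D f.
Proof.
move=> mf ig f_le; apply: (le_integrable mD _ _ ig).
  exact/measurable_EFinP.
by move=> x Dx /=; rewrite lee_fin (le_trans (f_le x Dx)) ?ler_norm.
Qed.

Lemma cintegrableZ (c : R[i]) h : cintegrable D h -> cintegrable D (fun x => c * h x).
Proof.
move=> [iRe iIm]; split.
- apply: (eq_integrable mD _ _ _
    (rintegrableD (rintegrableZ (Re c) iRe) (rintegrableZ (- Im c) iIm))) => x _.
  by rewrite /= complex_ReM mulNr.
- apply: (eq_integrable mD _ _ _
    (rintegrableD (rintegrableZ (Re c) iIm) (rintegrableZ (Im c) iRe))) => x _ /=.
  by rewrite complex_ImM.
Qed.

Lemma eq_cint h1 h2 : {in D, h1 =1 h2} -> cint D h1 = cint D h2.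
Proof. by move=> e; congr Complex; apply: eq_Rintegral => x /e ->. Qed.

Lemma cintD h1 h2 : cintegrable D h1 -> cintegrable D h2 ->
  cint D (fun x => h1 x + h2 x) = cint D h1 + cint D h2.
Proof.
move=> [? ?] [? ?]; congr Complex; rewrite -RintegralD //; apply: eq_Rintegral => x _.
- exact: complex_ReD.
- exact: complex_ImD.
Qed.

Lemma cintZ (c : R[i]) h : cintegrable D h -> cint D (fun x => c * h x) = c * cint D h.
Proof.
move=> [? ?]; apply: complex_ext => /=.
- rewrite complex_ReM -mulNr -!RintegralZl // -RintegralD ?rintegrableZ //.
  by apply: eq_Rintegral => x _; rewrite complex_ReM mulNr.
- rewrite complex_ImM -!RintegralZl // -RintegralD ?rintegrableZ //.
  by apply: eq_Rintegral => x _; rewrite complex_ImM.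
Qed.

Lemma Rintegral_sqr_le (h F G : R -> R) :
  rintegrable D h -> rintegrable D F -> rintegrable D G ->
  (forall x, D x -> 0 <= F x) -> (forall x, D x -> 0 <= G x) ->
  (forall t x, 0 < t -> D x -> 2 * t * `|h x| <= t ^+ 2 * F x + G x) ->
  (\int[mu]_(x in D) h x) ^+ 2 <= (\int[mu]_(x in D) F x) * \int[mu]_(x in D) G x.
Proof.
move=> ih iF iG F_ge0 G_ge0 amgm.
apply: sqr_le_mul_of_amgm; [exact: Rintegral_ge0 | exact: Rintegral_ge0 |].
move=> t t_gt0; have ih_norm := integrable_norm ih.
apply: (@le_trans _ _ (2 * t * \int[mu]_(x in D) `|h x|)).
  by apply: ler_wpM2l; [rewrite mulr_ge0 ?ltW | exact: le_normr_Rintegral].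
rewrite -RintegralZl // -RintegralZl // -RintegralD ?rintegrableZ //.
apply: le_Rintegral => //; first exact: rintegrableZ.
  exact: rintegrableD (rintegrableZ _ iF) iG.
by move=> x Dx; apply: amgm.
Qed.

End ComplexIntegral.

Section L2Space.
Variable R : realType.
Local Notation I01 := (@I01 R).
Implicit Types (f g h : R -> R[i]).

Lemma measurable_I01 : measurable (I01 : set (measurableTypeR R)).
Proof. exact: measurable_itv. Qed.
Local Hint Resolve measurable_I01 : core.

Lemma L2_of_continuous h :
  {within I01, continuous (fun x => Re (h x))} ->
  {within I01, continuous (fun x => Im (h x))} -> L2 h.
Proof.
move=> cRe cIm; split.
- by apply: subspace_continuous_measurable_fun; [ | exact: cRe].
- by apply: subspace_continuous_measurable_fun; [ | exact: cIm].
- apply: continuous_compact_integrable; first by apply: segment_compact.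
  by move=> x; apply: cvgD; apply: cvgM; [exact: cRe | exact: cRe | exact: cIm | exact: cIm].
Qed.

Lemma L2_cst (c : R[i]) : L2 (fun=> c).
Proof. by apply: L2_of_continuous => x; apply: cvg_cst. Qed.

Lemma L2_cmeasurable f : L2 f -> cmeasurable I01 f.
Proof. by case. Qed.

Lemma cintegrable_mul_conj f g : L2 f -> L2 g ->
  cintegrable I01 (fun x => f x * conjc (g x)).
Proof.
move=> Lf Lg; have [_ _ iF] := Lf; have [_ _ iG] := Lg.
have dom : rintegrable I01 (fun x => sqnormc (f x) + sqnormc (g x)).
  exact: (rintegrableD measurable_I01 iF iG).
have [mRe mIm] := cmeasurableM (L2_cmeasurable Lf) (cmeasurableJ (L2_cmeasurable Lg)).
have amgm1 (u : R) z w : 2 * 1 * `|u| <= 1 ^+ 2 * sqnormc z + sqnormc w ->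
    `|u| <= sqnormc z + sqnormc w.
  by rewrite expr1n mul1r mulr1 => u_le; have := normr_ge0 u; lra.
split; apply: (rintegrable_le measurable_I01 _ dom) => // x _; apply: amgm1.
- exact: ReMJ_amgm.
- exact: ImMJ_amgm.
Qed.

Lemma L2_cintegrable f : L2 f -> cintegrable I01 f.
Proof.
move=> Lf; have [iRe iIm] := cintegrable_mul_conj Lf (L2_cst 1).
split; [apply: (eq_integrable measurable_I01 _ _ _ iRe) |
        apply: (eq_integrable measurable_I01 _ _ _ iIm)] => x _.
- by rewrite [in LHS]/comp complex_ReMJ /= mulr1 mulr0 addr0.
- by rewrite [in LHS]/comp complex_ImMJ /= mulr1 mulr0 subr0.
Qed.

Lemma ip_lincombl (c1 c2 : R[i]) g1 g2 h : L2 g1 -> L2 g2 -> L2 h ->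
  ip (fun x => c1 * g1 x + c2 * g2 x) h = c1 * ip g1 h + c2 * ip g2 h.
Proof.
move=> L1 L2' Lh; rewrite /ip.
rewrite (@eq_cint _ _ _ (fun x => c1 * (g1 x * conjc (h x)) + c2 * (g2 x * conjc (h x))))
  => [|x _]; last by rewrite mulrDl !mulrA.
by rewrite cintD ?cintZ //; try apply: cintegrableZ => //; exact: cintegrable_mul_conj.
Qed.

Lemma ip_lincombr f (c1 c2 : R[i]) g1 g2 : L2 f -> L2 g1 -> L2 g2 ->
  ip f (fun x => c1 * g1 x + c2 * g2 x) = conjc c1 * ip f g1 + conjc c2 * ip f g2.
Proof.
move=> Lf L1 L2'; rewrite /ip.
rewrite (@eq_cint _ _ _
    (fun x => conjc c1 * (f x * conjc (g1 x)) + conjc c2 * (f x * conjc (g2 x))))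
  => [|x _]; last by rewrite rmorphD !rmorphM mulrDr !mulrA ![_ * conjc _]mulrC.
by rewrite cintD ?cintZ //; try apply: cintegrableZ => //; exact: cintegrable_mul_conj.
Qed.

Lemma ipC f g : L2 f -> L2 g -> ip f g = conjc (ip g f).
Proof.
move=> Lf Lg; have [_ iIm] := cintegrable_mul_conj Lg Lf.
apply: complex_ext; rewrite /ip /cint /= ?opprK.
- by apply: eq_Rintegral => x _; rewrite !complex_ReMJ; ring.
- rewrite -mulN1r -RintegralZl //.
  by apply: eq_Rintegral => x _; rewrite !complex_ImMJ; ring.
Qed.

Lemma ip0r f : ip f (fun=> 0) = 0.
Proof.
rewrite /ip (@eq_cint _ _ _ (fun=> 0)) => [|x _]; last by rewrite conjc0 mulr0.
by rewrite /cint /= Rintegral_cst ?mul0r.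
Qed.

Definition sqnormL2 f : R := \int[mu]_(x in I01) sqnormc (f x).

Lemma sqnormL2_ge0 f : 0 <= sqnormL2 f.
Proof. by apply: Rintegral_ge0 => x _; exact: sqnormc_ge0. Qed.

Lemma Re_ip_self f : Re (ip f f) = sqnormL2 f.
Proof. by apply: eq_Rintegral => x _; rewrite complex_ReMJ /sqnormc !expr2. Qed.

(* Cauchy-Schwarz up to a factor 2 coming from the separate treatment of real and imaginary
   parts; any constant suffices for boundedness. *)
Lemma sqnormc_ip_le f g : L2 f -> L2 g ->
  sqnormc (ip f g) <= 2 * (sqnormL2 f * sqnormL2 g).
Proof.
move=> Lf Lg; have [iRe iIm] := cintegrable_mul_conj Lf Lg.
have [_ _ iF] := Lf; have [_ _ iG] := Lg.
rewrite /sqnormc /= mulr2n mulrDl mul1r.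
apply: lerD; apply: Rintegral_sqr_le => //; try by move=> x _; exact: sqnormc_ge0.
- by move=> t x t_gt0 _; exact: ReMJ_amgm.
- by move=> t x t_gt0 _; exact: ImMJ_amgm.
Qed.

Lemma L2_lincomb (c1 c2 : R[i]) g1 g2 : L2 g1 -> L2 g2 ->
  L2 (fun x => c1 * g1 x + c2 * g2 x).
Proof.
move=> L1 L2'; have [_ _ i1] := L1; have [_ _ i2] := L2'.
have mc : cmeasurable I01 (fun x => c1 * g1 x + c2 * g2 x).
  by apply: cmeasurableD; apply: cmeasurableM;
    (exact: cmeasurable_cst || exact: L2_cmeasurable).
have [mRe mIm] := mc; split => //.
have dom : rintegrable I01
    (fun x => 2 * sqnormc c1 * sqnormc (g1 x) + 2 * sqnormc c2 * sqnormc (g2 x)).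
  by apply: rintegrableD => //; apply: rintegrableZ.
apply: (rintegrable_le measurable_I01 (measurable_sqnormc mc) dom) => x _.
by rewrite ger0_norm ?sqnormc_ge0 // sqnormc_lincomb_le.
Qed.

Lemma sqnormL2_lincomb_le (c1 c2 : R[i]) g1 g2 : L2 g1 -> L2 g2 ->
  sqnormL2 (fun x => c1 * g1 x + c2 * g2 x)
    <= 2 * sqnormc c1 * sqnormL2 g1 + 2 * sqnormc c2 * sqnormL2 g2.
Proof.
move=> L1 L2'; have [_ _ i1] := L1; have [_ _ i2] := L2'.
have [_ _ i12] := L2_lincomb c1 c2 L1 L2'.
rewrite /sqnormL2 -!RintegralZl // -RintegralD ?rintegrableZ //.
apply: le_Rintegral => //.
- by apply: rintegrableD => //; apply: rintegrableZ.
- by move=> x _; exact: sqnormc_lincomb_le.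
Qed.

Lemma continuous_primitive (c : R) (g : R -> R) : rintegrable I01 g ->
  {within I01, continuous (fun x => c + \int[mu]_(t in `[0, x]) g t)}.
Proof.
move=> ig x; apply: cvgD; first exact: cvg_cst.
exact: (parameterized_integral_continuous ler01 ig).
Qed.

Lemma W21_L2 (psi phi : R -> R[i]) : W21 psi phi -> L2 psi.
Proof.
move=> [Lphi psiE]; have [iRe iIm] := L2_cintegrable Lphi.
apply: L2_of_continuous.
- apply: (subspace_eq_continuous _ (continuous_primitive (c := Re (psi 0)) iRe)) => x x01.
  by rewrite /from_subspace /= (psiE x x01) complex_ReD.
- apply: (subspace_eq_continuous _ (continuous_primitive (c := Im (psi 0)) iIm)) => x x01.
  by rewrite /from_subspace /= (psiE x x01) complex_ImD.
Qed.

End L2Space.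

Section RankTwoPerturbation.
Variables (R : realType) (v1 v2 : R -> R[i]) (a : R).
Hypotheses (L2v1 : L2 v1) (L2v2 : L2 v2).
Local Notation v := (fun x => v1 x + expi a * v2 x).

Lemma ip_merged f : L2 f -> ip f v = ip f v1 + conjc (expi a) * ip f v2.
Proof.
move=> Lf; have -> : v = (fun x => 1 * v1 x + expi a * v2 x).
  by apply/funext => x; rewrite mul1r.
by rewrite ip_lincombr // rmorph1 mul1r.
Qed.

Lemma domA_merged psi : L2 psi -> domA v1 v2 a psi <-> domA v (fun=> 0) a psi.
Proof.
move=> Lpsi; rewrite /domA ip0r ip_merged // mulr0 addr0.
have -> : expi a * (psi 0 - 'i%C * (ip psi v1 + conjc (expi a) * ip psi v2))
    = expi a * (psi 0 - 'i%C * ip psi v1) - 'i%C * ip psi v2 by ring: (expi_mulJ a).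
by split => [<-|->]; ring.
Qed.

Lemma opA_sub_merged psi phi x : L2 psi -> domA v1 v2 a psi ->
  opA v1 v2 psi phi x - opA v (fun=> 0) psi phi x = opK v1 v2 a psi x.
Proof.
move=> Lpsi; rewrite /domA /opA /opK ip0r ip_merged // => dom.
have -> : psi 1 = expi a * (psi 0 - 'i%C * ip psi v1) - 'i%C * ip psi v2.
  by rewrite -dom; ring.
by cbv beta; field: (expi_mulJ a).
Qed.

Lemma opKE f : opK v1 v2 a f = fun x =>
  ('i%C / 2%:R * conjc (expi a) * ip f v2) * v1 x
  + (- ('i%C / 2%:R) * expi a * ip f v1) * v2 x.
Proof. by apply/funext => x; rewrite /opK; ring. Qed.

Lemma opK_bounded : exists c : R, forall f, L2 f ->
  L2 (opK v1 v2 a f) /\ l2norm (opK v1 v2 a f) <= c * l2norm f.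
Proof.
exists (Num.sqrt (2 * (sqnormL2 v1 * sqnormL2 v2))) => f Lf.
rewrite opKE; split; first exact: L2_lincomb.
have Nf_ge0 := sqnormL2_ge0 f; have N1_ge0 := sqnormL2_ge0 v1.
have N2_ge0 := sqnormL2_ge0 v2.
rewrite /l2norm !Re_ip_self -sqrtrM; last by rewrite !mulr_ge0.
rewrite ler_sqrt; last by rewrite !mulr_ge0.
apply: le_trans (sqnormL2_lincomb_le _ _ L2v1 L2v2) _.
rewrite !sqnormcM sqnormcN sqnormcJ sqnormc_expi -sqnormcM sqnormc_ihalf !mulr1.
have := sqnormc_ip_le Lf L2v1; have := sqnormc_ip_le Lf L2v2.
by have := sqnormc_ge0 (ip f v1); have := sqnormc_ge0 (ip f v2); nra.
Qed.

Lemma opK_selfadjoint f g : L2 f -> L2 g ->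
  ip (opK v1 v2 a f) g = ip f (opK v1 v2 a g).
Proof.
move=> Lf Lg; rewrite !opKE ip_lincombl // ip_lincombr //.
by rewrite !(conjcM, conjcN) conjcK conjc_i conjc_invn -!ipC //; ring.
Qed.

Lemma opK_rank2 : exists u1 u2 : R -> R[i], forall f, L2 f ->
  exists c1 c2 : R[i], forall x, opK v1 v2 a f x = c1 * u1 x + c2 * u2 x.
Proof. by exists v1, v2 => f _; do 2 eexists; move=> x; rewrite opKE. Qed.

End RankTwoPerturbation.

Theorem theorem5p2 (R : realType) (v1 v2 : R -> R[i]) (a : R) :
  L2 v1 -> L2 v2 -> 0 <= a < 2 * pi ->
  let v := fun x => v1 x + expi a * v2 x in
  (* same domain *)
  (forall psi phi : R -> R[i], W21 psi phi ->
     (domA v1 v2 a psi <-> domA v (fun _ => 0) a psi)) /\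
  (* the difference on the common domain *)
  (forall psi phi : R -> R[i], W21 psi phi -> domA v1 v2 a psi ->
     {ae @lebesgue_measure R, forall x, x \in @I01 R ->
        opA v1 v2 psi phi x - opA v (fun _ => 0) psi phi x
        = opK v1 v2 a psi x}) /\
  (* the difference operator is bounded on L_2 *)
  (exists c : R, forall f, L2 f ->
     L2 (opK v1 v2 a f) /\ l2norm (opK v1 v2 a f) <= c * l2norm f) /\
  (* self-adjoint *)
  (forall f g, L2 f -> L2 g -> ip (opK v1 v2 a f) g = ip f (opK v1 v2 a g)) /\
  (* rank at most 2 *)
  (exists u1 u2 : R -> R[i], forall f, L2 f ->
     exists c1 c2 : R[i], forall x, opK v1 v2 a f x = c1 * u1 x + c2 * u2 x).
Proof.
move=> L2v1 L2v2 _ v; split; [|split; [|split; [|split]]].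
- by move=> psi phi /W21_L2; apply: domA_merged.
- by move=> psi phi /W21_L2 Lpsi dom; apply: aeW => x _; apply: opA_sub_merged.
- exact: opK_bounded.
- exact: opK_selfadjoint.
- exact: opK_rank2.
Qed.
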